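(* Let $A\in\mathbb{R}^{n\times n}$, $r\in\{1,\dots,n-1\}$ with $\mathrm{Re}(\lambda_r(A))>\mathrm{Re}(\lambda_{r+1}(A))$, let $P\in\mathbb{R}^{n\times n}$ be a permutation matrix with $Pe_i=e_{\pi(i)}$, and let $\bar U_P=\Psi P\begin{bsmallmatrix}K_r\\ O_{n-r,r}\end{bsmallmatrix}\in\mathrm{St}(r,n)$, with $K_r\in\mathbb{C}^{r\times r}$ invertible, be an equilibrium point of the Oja flow $\frac{dU}{dt}=(I_n-UU^{\top})AU$. Then the eigenvalues (with multiplicity) of $\bar U_P^{\top}A\bar U_P$ are $\lambda_{\pi(1)}(A),\dots,\lambda_{\pi(r)}(A)$.
   Context: $\mathrm{St}(r,n):=\{X\in\mathbb{R}^{n\times r}\mid X^{\top}X=I_r\}$. Eigenvalues of $A$ are ordered as $\mathrm{Re}(\lambda_1(A))\ge\dots\ge\mathrm{Re}(\lambda_n(A))$. $\Psi=[\psi_1,\dots,\psi_n]\in\mathbb{C}^{n\times n}$ is an invertible matrix of unit-norm (generalized) eigenvectors of $A$ for $\lambda_1(A),\dots,\lambda_n(A)$ with $\Psi^{-1}A\Psi$ the Jordan form of $A$. *)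

From HB Require Import structures.
From mathcomp Require Import all_boot all_order all_fingroup all_algebra.
From mathcomp Require Import complex.
From mathcomp Require Import reals.
Set Implicit Arguments. Unset Strict Implicit. Unset Printing Implicit Defensive.
Import Order.TTheory GRing.Theory Num.Theory.
Local Open Scope ring_scope.

Definition cmx (R : realType) (m p : nat) (M : 'M[R]_(m, p)) : 'M[R[i]]_(m, p) :=
  map_mx (fun x : R => (x%:C)%C) M.

Definition is_jordan_form (R : realType) (n : nat) (J : 'M[R[i]]_n) (lam : seq R[i]) : Prop :=
  [/\ forall i : 'I_n, J i i = lam`_i,
      forall i j : 'I_n, (j : nat) <> i -> (j : nat) <> i.+1 -> J i j = 0 &
      forall i j : 'I_n, (j : nat) = i.+1 ->
        J i j = 0 \/ (J i j = 1 /\ lam`_i = lam`_j)].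

(* lam = (lambda_1, ..., lambda_n) (0-indexed here) is the list of eigenvalues of A,
   ordered by nonincreasing real part, and Psi is an invertible matrix of unit-norm
   (generalized) eigenvectors such that Psi^-1 A Psi is the Jordan form of A. *)
Definition ordered_jordan_basis (R : realType) (n : nat) (A : 'M[R]_n)
    (lam : seq R[i]) (Psi : 'M[R[i]]_n) : Prop :=
  [/\ size lam = n,
      forall i j : 'I_n, (i <= j)%N -> complex.Re lam`_j <= complex.Re lam`_i,
      Psi \in unitmx,
      forall j : 'I_n, \sum_(i < n) `|Psi i j| ^+ 2 = 1 &
      is_jordan_form (invmx Psi *m cmx A *m Psi) lam].

Definition perm_matrix (F : pzRingType) (n : nat) (pi : 'S_n) : 'M[F]_n :=
  \matrix_(k, i) (k == pi i)%:R.

Definition stiefel (R : realType) (n r : nat) (U : 'M[R]_(n, r)) : Prop :=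
  U^T *m U = 1%:M.

Definition oja_equilibrium (R : realType) (n r : nat) (A : 'M[R]_n) (U : 'M[R]_(n, r)) : Prop :=
  (1%:M - U *m U^T) *m A *m U = 0.

From HB Require Import structures.
From mathcomp Require Import all_boot all_order all_fingroup all_algebra.
From mathcomp Require Import complex.
From mathcomp Require Import reals.
Import Order.TTheory GRing.Theory Num.Theory.
Local Open Scope ring_scope.

(* The equilibrium equation (I - U U^T) A U = 0 says A U = U B with
   B = U^T A U, so the columns of U span an A-invariant subspace.  In the
   Jordan basis Psi this subspace is, up to the invertible K, the coordinate
   subspace of the indices pi(1), ..., pi(r); hence B is similar to the
   principal submatrix of the Jordan form J on these indices.  Ranking its rows
   and columns by the value of pi makes this submatrix upper triangular, because
   J is, so its characteristic polynomial is the product of the X - lambda_pi(i). *)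

Lemma perm_rank_descent {T : finType} {g : T -> nat} {s : {perm T}} :
  injective g -> s != 1%g -> exists i, (g (s i) < g i)%N.
Proof.
move=> g_inj s_neq1; apply/existsP; apply: contraR s_neq1 => /existsPn no_descent.
have g_le i : (g i <= g (s i))%N by rewrite leqNgt no_descent.
have : (\sum_i (g (s i) - g i) == 0)%N.
  have sum_perm : (\sum_i g (s i) = \sum_i g i)%N.
    by rewrite [RHS](reindex_inj (@perm_inj _ s)).
  by rewrite sumnB // sum_perm subnn.
rewrite sum_nat_eq0 => /forallP g_fixed.
apply/eqP/permP => i; rewrite perm1; apply: g_inj; apply/eqP.
by rewrite eqn_leq g_le andbT -subn_eq0; apply: g_fixed.
Qed.

Lemma det_trig_rank {R : comPzRingType} {n} {g : 'I_n -> nat} (A : 'M[R]_n) :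
  injective g -> (forall i j, (g j < g i)%N -> A i j = 0) -> \det A = \prod_i A i i.
Proof.
move=> g_inj A_trig; rewrite /determinant (bigD1 1%g) //= [X in _ + X]big1 ?addr0.
  by rewrite odd_perm1 expr0 mul1r; apply: eq_bigr => i _; rewrite perm1.
move=> s s_neq1; have [i descent] := perm_rank_descent g_inj s_neq1.
by rewrite (bigD1 i) //= A_trig // mul0r mulr0.
Qed.

Lemma char_poly_trig_rank {R : comNzRingType} {n} {g : 'I_n -> nat} (A : 'M[R]_n) :
  injective g -> (forall i j, (g j < g i)%N -> A i j = 0) ->
  char_poly A = \prod_i ('X - (A i i)%:P).
Proof.
move=> g_inj A_trig; rewrite /char_poly (det_trig_rank _ g_inj).
  by apply: eq_bigr => i _; rewrite !mxE eqxx.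
move=> i j descent; have /negbTE ij : i != j by apply: contraTneq descent => ->; rewrite ltnn.
by rewrite !mxE A_trig // ij subrr.
Qed.

Lemma char_poly_similar {F : fieldType} {n} {M B K : 'M[F]_n} :
  K \in unitmx -> M *m K = K *m B -> char_poly M = char_poly B.
Proof.
move=> K_unit MK; set Kp := map_mx polyC K.
have : char_poly_mx M *m Kp = Kp *m char_poly_mx B.
  by rewrite mulmxBl mulmxBr mul_scalar_mx mul_mx_scalar -!map_mxM MK.
move/(congr1 determinant); rewrite !det_mulmx [RHS]mulrC det_map_mx.
by apply: mulIf; rewrite polyC_eq0 -unitfE -unitmxE.
Qed.

Lemma char_poly_ulsubmx_invariant {F : fieldType} {r m}
    {M : 'M[F]_(r + m)} {K B : 'M[F]_r} :
  K \in unitmx -> M *m col_mx K 0 = col_mx K 0 *m B ->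
  char_poly B = char_poly (ulsubmx M).
Proof.
move=> K_unit; rewrite -[M]submxK mul_block_col mul_col_mx => /eq_col_mx [MK _].
by apply/esym/(char_poly_similar K_unit); rewrite -MK block_mxKul mulmx0 addr0.
Qed.

Lemma ulsubmx_perm_conj (R : pzRingType) r m (s : 'S_(r + m)) (M : 'M[R]_(r + m)) :
  ulsubmx (perm_mx s *m M *m perm_mx s^-1) =
  \matrix_(i, j) M (s (lshift m i)) (s (lshift m j)).
Proof. by apply/matrixP => i j; rewrite -row_permE -col_permE !mxE. Qed.

Lemma perm_conj_intertwine {R : pzRingType} {n p} {s : 'S_n} {M : 'M[R]_n}
    {X : 'M[R]_(n, p)} {B : 'M[R]_p} :
  M *m (perm_mx s^-1 *m X) = perm_mx s^-1 *m X *m B ->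
  perm_mx s *m M *m perm_mx s^-1 *m X = X *m B.
Proof.
by move=> MX; rewrite -!mulmxA MX !mulmxA -perm_mxM mulgV perm_mx1 mul1mx.
Qed.

Lemma perm_matrixE (R : pzRingType) n (s : 'S_n) : perm_matrix R s = perm_mx s^-1.
Proof. by apply/matrixP => k i; rewrite !mxE (can2_eq (permKV s) (permK s)). Qed.

Lemma cmxM (R : realType) a b c (X : 'M[R]_(a, b)) (Y : 'M[R]_(b, c)) :
  cmx (X *m Y) = cmx X *m cmx Y.
Proof. exact: map_mxM. Qed.

Lemma jordan_form_upper {R : realType} {n} {J : 'M[R[i]]_n} {lam} :
  is_jordan_form J lam -> forall i j : 'I_n, (j < i)%N -> J i j = 0.
Proof.
case=> _ J_band _ i j ji; apply: J_band => [e|e]; move: ji; rewrite e.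
  by rewrite ltnn.
by rewrite ltnNge leqnSn.
Qed.

Lemma oja_equilibrium_invariant {R : realType} {n r} {A : 'M[R]_n} {U : 'M[R]_(n, r)} :
  oja_equilibrium A U -> A *m U = U *m (U^T *m A *m U).
Proof.
rewrite /oja_equilibrium !mulmxBl !mul1mx => /eqP; rewrite subr_eq0 => /eqP ->.
by rewrite !mulmxA.
Qed.

Theorem proposition3 (R : realType) (r m : nat) (hr : (0 < r)%N) (hm : (0 < m)%N)
    (A : 'M[R]_(r + m)) (lam : seq R[i]) (Psi : 'M[R[i]]_(r + m))
    (hPsi : ordered_jordan_basis A lam Psi)
    (hgap : complex.Re lam`_r < complex.Re lam`_(r.-1))
    (pi : 'S_(r + m)) (K : 'M[R[i]]_r) (hK : K \in unitmx)
    (U : 'M[R]_(r + m, r))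
    (hU : cmx U = Psi *m perm_matrix _ pi *m col_mx K 0)
    (hSt : stiefel U)
    (heq : oja_equilibrium A U) :
  char_poly (cmx (U^T *m A *m U)) =
  \prod_(i < r) ('X - (lam`_(pi (lshift m i)))%:P).
Proof.
case: hPsi => _ _ Psi_unit _ J_jordan.
set J := invmx Psi *m cmx A *m Psi in J_jordan *.
set B := cmx (U^T *m A *m U); set W := col_mx K (0 : 'M_(m, r)).
have AU : cmx A *m cmx U = cmx U *m B by rewrite -!cmxM -(oja_equilibrium_invariant heq).
have JPW : J *m (perm_mx pi^-1 *m W) = perm_mx pi^-1 *m W *m B.
  rewrite perm_matrixE -mulmxA in hU.
  by rewrite /J -!mulmxA -hU AU hU !mulmxA mulVmx // mul1mx.
rewrite (char_poly_ulsubmx_invariant hK (perm_conj_intertwine JPW)) ulsubmx_perm_conj.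
have pi_rank_inj : injective (fun i => val (pi (lshift m i))).
  by move=> i j /val_inj /perm_inj /lshift_inj.
rewrite (char_poly_trig_rank _ pi_rank_inj).
  by apply: eq_bigr => i _; rewrite mxE; case: J_jordan => ->.
by move=> i j descent; rewrite mxE (jordan_form_upper J_jordan).
Qed.
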